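(* Let $A$ be a finite alphabet. An infinite word $x$ over $A$ is normal if and only if there is a positive number $C$ such that for infinitely many lengths $\ell$, for every word $w$ of length $\ell$, $$\limsup_{N\to\infty}\frac{|x[1..\ell N]|^{al}_w}{N}<\frac{C}{|A|^\ell}.$$
   Context: $x[i..j]$ is the factor of $x$ from position $i$ to $j$ (positions start at 1). For words $v,w$, $|v|^{al}_w=|\{i: v[i..i+|w|-1]=w,\ i\equiv1\bmod|w|\}|$ (aligned occurrences). $x$ is normal if for every $\ell\ge1$ and every $u\in A^\ell$, $\lim_{n\to\infty}|x[1..n]|^{al}_u/(n/\ell)=|A|^{-\ell}$. *)

From mathcomp Require Import all_boot.
From Stdlib Require Import Reals.
From Coquelicot Require Import Coquelicot.
Set Implicit Arguments.
Unset Strict Implicit.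
Unset Printing Implicit Defensive.

(* An infinite word over A: position i (1-based in the paper) is x (i-1). *)
Definition word_prefix (A : Type) (x : nat -> A) (n : nat) : seq A := mkseq x n.

(* |v|^{al}_w : number of 1-based positions i with v[i..i+|w|-1] = w and
   i = 1 mod |w|; in 0-based indexing i ranges over 0..|v|-|w| with
   i = 0 mod |w|. *)
Definition aligned_occ (A : eqType) (v w : seq A) : nat :=
  (count (fun i => (i %% size w == 0%nat) && (take (size w) (drop i v) == w))
        (seq.iota 0%nat (size v - size w).+1))%N.

Definition normal (A : finType) (x : nat -> A) : Prop :=
  forall (l : nat) (u : seq A), (0 < l)%nat -> size u = l ->
    is_lim_seq (fun n => (INR (aligned_occ (word_prefix x n) u) / (INR n / INR l))%R)
               (Finite (/ (INR #|A| ^ l))%R).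

From HB Require Import structures.
From mathcomp Require Import all_boot zify.
From Stdlib Require Import Reals Lra.
From Coquelicot Require Import Coquelicot.

(* Cut x into consecutive blocks of length l: an aligned occurrence of u, with
   |u| = l, is just an l-block equal to u, so x is normal iff every u occupies
   asymptotically a fraction |A|^-l of the l-blocks ([normalE]).  Normality gives
   the condition with C = 2.  Conversely fix u and a long admissible length L, and
   cut the prefix into L-blocks instead.  Inside an L-block t, at a given offset,
   the number of aligned occurrences of u has mean |A|^-l times the number of
   aligned slots over all t, and the variance of a binomial count because the
   slots are disjoint; so the total deviation from the mean, summed over all
   |A|^L words t, is small.  The hypothesis says that no L-word occurs more than
   C times its fair share, so weighting the deviations by the actual block counts
   keeps them small, and the l-block frequency of u is at most |A|^-l + o(1).
   As the frequencies of the words of length l sum to 1, the upper bounds for all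
   of them also give the matching lower bound. *)

Set Implicit Arguments.
Unset Strict Implicit.
Unset Printing Implicit Defensive.

Local Open Scope nat_scope.
(* Coquelicot exports another [iota]. *)
Local Notation iota := seq.iota.

Section Words.
Variable A : finType.

Fixpoint words (n : nat) : seq (seq A) :=
  if n is n'.+1 then [seq a :: w | a <- enum A, w <- words n'] else [:: [::]].

Lemma size_words n : size (words n) = expn #|A| n.
Proof. by elim: n => [|n IHn] //=; rewrite size_allpairs IHn -cardE expnS. Qed.

Lemma mem_words n w : (w \in words n) = (size w == n).
Proof.
elim: n w => [|n IHn] [|a w] //=.
  by apply/allpairsP => -[[b v] /= [_ _]].
rewrite eqSS -IHn; apply/allpairsP/idP => [[[b v] /= [_ vn [_ ->]]] // | wn].
by exists (a, w); rewrite /= mem_enum.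
Qed.

Lemma uniq_words n : uniq (words n).
Proof.
elim: n => [|n IHn] //=; apply: allpairs_uniq => //; first exact: enum_uniq.
by move=> [a w] [b v] _ _ [-> ->].
Qed.

Lemma big_words_add (R : Type) (idx : R) (op : Monoid.law idx) m n (F : seq A -> R) :
  \big[op/idx]_(w <- words (m + n)) F w =
  \big[op/idx]_(p <- words m) \big[op/idx]_(w <- words n) F (p ++ w).
Proof.
elim: m F => [|m IHm] F; first by rewrite big_seq1.
by rewrite addSn /= !big_allpairs_dep; apply: eq_bigr => a _; rewrite IHm.
Qed.

End Words.

Lemma count_iota_add (P : pred nat) m n :
  count P (iota 0 (m + n)) = count P (iota 0 m) + count (fun i => P (m + i)) (iota 0 n).
Proof.
by rewrite iotaD count_cat add0n -[in iota m _](addn0 m) iotaDl count_map.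
Qed.

Lemma count_iota_tail n k : count (fun i => n < i + k) (iota 0 n) <= k.
Proof.
rewrite [in iota 0 n](_ : n = (n - k) + (n - (n - k))); last by lia.
rewrite count_iota_add (@eq_in_count _ _ pred0) ?count_pred0; last first.
  by move=> i; rewrite mem_iota => /andP [_ ?]; apply/negbTE; lia.
by apply: leq_trans (count_size _ _) _; rewrite size_iota; lia.
Qed.

Lemma take_drop_catl (T : Type) (v w : seq T) i k :
  i + k <= size v -> take k (drop i (v ++ w)) = take k (drop i v).
Proof. by move=> fit; rewrite !take_drop takel_cat //; lia. Qed.

Lemma drop_size_catr (T : Type) (v w : seq T) i : drop (size v + i) (v ++ w) = drop i w.
Proof. by rewrite drop_cat ltnNge leq_addr /= addKn. Qed.

Section AlignedOccurrences.
Variables (A : eqType) (u : seq A).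
Local Notation l := (size u).

(* Aligned occurrences of [u] in [v], where [v] is read as a factor starting at
   absolute position [r]: alignment is counted from there. *)
Definition occ_at (r : nat) (v : seq A) : nat :=
  count (fun i => ((r + i) %% l == 0) && (take l (drop i v) == u)) (iota 0 (size v)).

Lemma occ_at_mod r v : occ_at (r %% l) v = occ_at r v.
Proof. by apply: eq_count => i; rewrite modnDml. Qed.

Lemma take_drop_eq_leq (v : seq A) i : 0 < l -> take l (drop i v) = u -> i + l <= size v.
Proof. by move=> u_gt0 /(congr1 size); rewrite size_take size_drop; case: ltnP; lia. Qed.

Lemma aligned_occE v : 0 < l -> aligned_occ v u = occ_at 0 v.
Proof.
move=> u_gt0; rewrite /aligned_occ /occ_at.
have fits i : take l (drop i v) == u -> i + l <= size v by move/eqP/take_drop_eq_leq; apply.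
have [lev|ltv] := leqP l (size v).
  rewrite [in iota 0 (size v)](_ : size v = (size v - l).+1 + l.-1); last by lia.
  rewrite count_iota_add (@eq_in_count _ _ pred0 (iota _ l.-1)) ?count_pred0 ?addn0 //.
  by move=> i _ /=; apply/negbTE/andP => -[_ /fits]; lia.
rewrite !(@eq_in_count _ _ pred0) ?count_pred0 // => i; rewrite mem_iota => /andP [_ i_lt];
  apply/negbTE/andP => -[_ /fits]; lia.
Qed.

Lemma occ_at_cat_aligned r (v w : seq A) : (r + size v) %% l = 0 ->
  occ_at r (v ++ w) = occ_at r v + occ_at (r + size v) w.
Proof.
move=> rv_al; rewrite /occ_at size_cat count_iota_add; congr (_ + _).
  apply: eq_in_count => i; rewrite mem_iota add0n => i_lt.
  case: eqP => //= ri_al; rewrite take_drop_catl //.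
  suff : l <= (r + size v) - (r + i) by lia.
  by apply: dvdn_leq; [lia | rewrite dvdn_sub // /dvdn ?ri_al ?rv_al].
by apply: eq_count => i; rewrite drop_size_catr addnA.
Qed.

Lemma occ_at_cat_le r (v w : seq A) :
  occ_at r (v ++ w) <= occ_at r v + l + occ_at (r + size v) w.
Proof.
rewrite /occ_at size_cat count_iota_add leq_add //; last first.
  by apply: eq_leq; apply: eq_count => i; rewrite drop_size_catr addnA.
set P := fun i => ((r + i) %% l == 0) && (take l (drop i v) == u).
apply: (@leq_trans (count (predU P (fun i => size v < i + l)) (iota 0 (size v)))).
  apply: sub_count => i /= /andP [r_al /eqP match_i].
  have [fit|] := leqP (i + l) (size v); last by rewrite orbT.
  by rewrite /P r_al -(take_drop_catl w fit) match_i eqxx.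
have := count_predUI P (fun i => size v < i + l) (iota 0 (size v)).
have := count_iota_tail (size v) l; lia.
Qed.

Lemma occ_at_small r (w : seq A) : 0 < l -> size w < l -> occ_at r w = 0.
Proof.
move=> u_gt0 w_short; rewrite /occ_at (@eq_in_count _ _ pred0) ?count_pred0 // => i _.
by apply/negbTE/andP => -[_ /eqP /take_drop_eq_leq fits]; have := fits u_gt0; lia.
Qed.

Lemma occ_at_cons r c (w : seq A) :
  occ_at r (c :: w) = ((r %% l == 0) && (take l (c :: w) == u)) + occ_at r.+1 w.
Proof.
rewrite /occ_at /= addn0 -[1]addn0 iotaDl count_map; congr (_ + _).
by apply: eq_count => i /=; rewrite add1n addnS.
Qed.

Lemma occ_at_eq_size r (w : seq A) : 0 < l -> size w = l ->
  occ_at r w = (r %% l == 0) && (w == u).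
Proof.
case: w => [|c w] u_gt0 wl; first by move: u_gt0; rewrite -wl.
by rewrite occ_at_cons take_oversize ?wl // occ_at_small ?addn0 // -wl.
Qed.

End AlignedOccurrences.

Section Blocks.
Variables (A : eqType) (x : nat -> A).

Definition block (L j : nat) : seq A := mkseq (fun k => x (j * L + k)) L.

Definition nblocks (L : nat) (t : seq A) (N : nat) : nat := \sum_(0 <= j < N) (block L j == t).

Lemma size_block L j : size (block L j) = L.
Proof. exact: size_mkseq. Qed.

Lemma nblocksS L t N : nblocks L t N.+1 = nblocks L t N + (block L N == t).
Proof. by rewrite /nblocks big_nat_recr. Qed.

Lemma nblocks_mono L t : {homo nblocks L t : M N / M <= N}.
Proof. by move=> M N MN; rewrite /nblocks (big_cat_nat (leq0n M) MN) leq_addr. Qed.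

Lemma size_word_prefix n : size (word_prefix x n) = n.
Proof. exact: size_mkseq. Qed.

Lemma word_prefix_add m n :
  word_prefix x (m + n) = word_prefix x m ++ mkseq (fun k => x (m + k)) n.
Proof. by rewrite /word_prefix /mkseq iotaD map_cat -[in iota m _](addn0 m) iotaDl -map_comp. Qed.

Lemma word_prefix_mulS L N : word_prefix x (L * N.+1) = word_prefix x (L * N) ++ block L N.
Proof.
by rewrite mulnS addnC word_prefix_add; congr (_ ++ _); apply: eq_mkseq => k; rewrite mulnC.
Qed.

Lemma occ_at_prefix_blocks (t : seq A) N : 0 < size t ->
  occ_at t 0 (word_prefix x (size t * N)) = nblocks (size t) t N.
Proof.
move=> t_gt0; elim: N => [|N IHN]; first by rewrite muln0 /nblocks big_geq.
rewrite word_prefix_mulS occ_at_cat_aligned ?size_word_prefix ?modnMr // IHN nblocksS.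
by rewrite occ_at_eq_size ?size_block // modnMr.
Qed.

Lemma aligned_occ_prefix (u : seq A) n : 0 < size u ->
  aligned_occ (word_prefix x n) u = nblocks (size u) u (n %/ size u).
Proof.
move=> u_gt0; rewrite aligned_occE // [in word_prefix x n](divn_eq n (size u)) mulnC.
rewrite word_prefix_add occ_at_cat_aligned ?size_word_prefix ?modnMr // occ_at_prefix_blocks //.
by rewrite [occ_at _ _ (mkseq _ _)]occ_at_small ?addn0 // size_mkseq ltn_pmod.
Qed.

Lemma occ_at_prefix_le (u : seq A) L N :
  occ_at u 0 (word_prefix x (L * N)) <= \sum_(0 <= j < N) (size u + occ_at u (j * L) (block L j)).
Proof.
elim: N => [|N IHN]; first by rewrite muln0.
rewrite word_prefix_mulS big_nat_recr //= addnA.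
apply: leq_trans (occ_at_cat_le _ _ _ _) _.
by rewrite size_word_prefix add0n [N * L]mulnC !leq_add2r.
Qed.

End Blocks.

Local Open Scope R_scope.

HB.instance Definition _ := Monoid.isComLaw.Build R 0 Rplus
  (fun a b c => esym (Rplus_assoc a b c)) Rplus_comm Rplus_0_l.

Local Notation "\sum_ ( i <- r ) F" := (\big[Rplus/0%R]_(i <- r) F%R) : R_scope.
Local Notation "\sum_ ( m <= i < n ) F" := (\big[Rplus/0%R]_(m <= i < n) F%R) : R_scope.

Lemma INR_sum (I : Type) (s : seq I) (f : I -> nat) :
  INR (\sum_(i <- s) f i)%nat = \sum_(i <- s) INR (f i).
Proof. exact: (big_morph INR plus_INR). Qed.

Lemma INR_expn m n : INR (expn m n) = INR m ^ n.
Proof. by elim: n => [|n IHn]; rewrite ?expn0 ?expnS ?mult_INR ?IHn. Qed.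

Lemma Rsum_const (I : Type) (s : seq I) (c : R) : \sum_(i <- s) c = INR (size s) * c.
Proof.
elim: s => [|a s IHs]; first by rewrite big_nil /=; ring.
by rewrite big_cons IHs (_ : size (a :: s) = (size s).+1) // S_INR; ring.
Qed.

Lemma Rsum_add (I : Type) (s : seq I) (F G : I -> R) :
  \sum_(i <- s) (F i + G i) = \sum_(i <- s) F i + \sum_(i <- s) G i.
Proof. by elim: s => [|a s IHs]; rewrite ?big_nil ?big_cons ?IHs; ring. Qed.

Lemma Rmult_sumr (I : Type) (s : seq I) (c : R) (F : I -> R) :
  c * \sum_(i <- s) F i = \sum_(i <- s) c * F i.
Proof. by elim: s => [|a s IHs]; rewrite ?big_nil ?big_cons -?IHs; ring. Qed.

Lemma Rmult_suml (I : Type) (s : seq I) (c : R) (F : I -> R) :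
  (\sum_(i <- s) F i) * c = \sum_(i <- s) F i * c.
Proof. by elim: s => [|a s IHs]; rewrite ?big_nil ?big_cons -?IHs; ring. Qed.

Lemma Rle_sum (I : eqType) (s : seq I) (F G : I -> R) :
  (forall i, i \in s -> F i <= G i) -> \sum_(i <- s) F i <= \sum_(i <- s) G i.
Proof.
move=> FG; rewrite big_seq_cond [X in _ <= X]big_seq_cond.
by apply: (big_ind2 Rle) => [|*|i /andP [/FG]] //; [lra | apply: Rplus_le_compat].
Qed.

Lemma Rsum_ge0 (I : eqType) (s : seq I) (F : I -> R) :
  (forall i, i \in s -> 0 <= F i) -> 0 <= \sum_(i <- s) F i.
Proof.
move=> F_ge0; rewrite big_seq_cond; apply: (big_ind (Rle 0)) => [|*|i /andP [/F_ge0]] //.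
  by lra.
exact: Rplus_le_le_0_compat.
Qed.

Lemma Rle_sum_term (I : eqType) (s : seq I) (F : I -> R) j :
  (forall i, i \in s -> 0 <= F i) -> j \in s -> F j <= \sum_(i <- s) F i.
Proof.
elim: s => [|a s IHs] // F_ge0; rewrite in_cons big_cons.
have F_ge0_s i : i \in s -> 0 <= F i by move=> i_s; apply: F_ge0; rewrite in_cons i_s orbT.
have := F_ge0 a (mem_head a s); have := Rsum_ge0 F_ge0_s.
by move=> ? ? /orP [/eqP -> | /(IHs F_ge0_s)]; lra.
Qed.

Lemma Rsum_pick (T : eqType) (W : seq T) (a : T) (G : T -> R) :
  uniq W -> a \in W -> \sum_(t <- W) INR (a == t) * G t = G a.
Proof.
move=> W_uniq aW; rewrite (bigD1_seq a) //= eqxx big1 => [|t]; first by rewrite /=; ring.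
by rewrite eq_sym => /negbTE ->; rewrite /=; ring.
Qed.

Lemma Rsum_regroup (I : Type) (T : eqType) (s : seq I) (f : I -> T) (W : seq T) (G : T -> R) :
  uniq W -> (forall i, f i \in W) ->
  \sum_(i <- s) G (f i) = \sum_(t <- W) INR (\sum_(i <- s) (f i == t))%nat * G t.
Proof.
move=> W_uniq fW; under [RHS]eq_bigr => t _ do rewrite INR_sum Rmult_suml.
rewrite exchange_big; apply: eq_bigr => i _ /=.
by rewrite Rsum_pick.
Qed.

Lemma Rsum_sq_add (I J : Type) (P : seq I) (W : seq J) (e : I -> R) (d : J -> R) :
  \sum_(p <- P) \sum_(w <- W) (e p + d w) ^ 2 =
  INR (size W) * \sum_(p <- P) e p ^ 2 + 2 * (\sum_(p <- P) e p) * (\sum_(w <- W) d w)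
  + INR (size P) * \sum_(w <- W) d w ^ 2.
Proof.
have inner p : \sum_(w <- W) (e p + d w) ^ 2 =
    INR (size W) * e p ^ 2 + 2 * e p * (\sum_(w <- W) d w) + \sum_(w <- W) d w ^ 2.
  elim: W => [|a W IHW]; first by rewrite !big_nil /=; ring.
  by rewrite !big_cons IHW (_ : size (a :: W) = (size W).+1) // S_INR; ring.
elim: P => [|a P IHP]; first by rewrite !big_nil /=; ring.
by rewrite !big_cons inner IHP (_ : size (a :: P) = (size P).+1) // S_INR; ring.
Qed.

Definition nwords (A : finType) (n : nat) : R := INR #|A| ^ n.

Lemma size_wordsR (A : finType) n : INR (size (words A n)) = nwords A n.
Proof. by rewrite size_words INR_expn. Qed.

Lemma nwordsS (A : finType) n : nwords A n.+1 = INR (size (enum A)) * nwords A n.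
Proof. by rewrite -cardE. Qed.

Lemma nwordsD (A : finType) m n : nwords A (m + n) = nwords A m * nwords A n.
Proof. exact: pow_add. Qed.

Lemma nwords_ge1 (A : finType) (a : A) n : 1 <= nwords A n.
Proof. by apply: pow_R1_Rle; apply: (le_INR 1); apply/leP/card_gt0P; exists a. Qed.

Section Variance.
Variables (A : finType) (u : seq A).
Local Notation l := (size u).
Local Notation q := (nwords A l).

Definition slots (r n : nat) : nat :=
  count (fun o => ((r + o) %% l == 0) && (o + l <= n))%nat (iota 0 n).

Lemma slots_small r n : (n < l)%nat -> slots r n = 0%nat.
Proof.
move=> n_lt; rewrite /slots (@eq_in_count _ _ pred0) ?count_pred0 // => o _.
by apply/negbTE/andP; lia.
Qed.

Lemma slots_cons r n : (r %% l != 0)%nat -> slots r n.+1 = slots r.+1 n.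
Proof.
move=> r_nal; rewrite /slots /= addn0 (negbTE r_nal) -[1%nat]addn0 iotaDl count_map.
by apply: eq_count => o /=; rewrite add1n addnS addSn.
Qed.

Lemma slots_add r n : (0 < l)%nat -> (r %% l = 0)%nat -> slots r (l + n) = (slots (r + l) n).+1.
Proof.
move=> u_gt0 r_al; rewrite /slots count_iota_add -addn1 addnC; congr (_ + _)%nat.
  by apply: eq_count => o; rewrite addnA; congr (_ && _); lia.
rewrite [in iota 0 l](_ : l = 1 + l.-1)%nat; last by lia.
rewrite count_iota_add /= !addn0 r_al /= add0n leq_addr.
rewrite (@eq_in_count _ _ pred0) ?count_pred0 // => o.
rewrite mem_iota => /andP [_ o_lt]; apply/negbTE/andP => -[/eqP + _].
by rewrite -modnDml r_al add0n modn_small; lia.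
Qed.

Lemma slots_le r n : (0 < l)%nat -> (slots r n * l <= n)%nat.
Proof.
move=> u_gt0; elim/ltn_ind: n r => n IHn r.
have [r_al|r_nal] := eqVneq (r %% l) 0%nat.
  have [n_lt|n_ge] := ltnP n l; first by rewrite slots_small.
  rewrite -(subnKC n_ge) slots_add // mulSn.
  by have := IHn (n - l)%nat ltac:(lia) (r + l)%nat; lia.
case: n IHn => [|n] IHn; first by rewrite /slots.
by rewrite slots_cons //; have := IHn n (ltnSn n) r.+1; lia.
Qed.

(* The slots are disjoint, so for a uniformly random word the matches in the slots
   are independent events of probability [1 / q]: a binomial variance. *)
Lemma sum_sq_occ_at r n : (0 < l)%nat ->
  \sum_(w <- words A n) (q * INR (occ_at u r w) - INR (slots r n)) ^ 2 =
  nwords A n * INR (slots r n) * (q - 1).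
Proof.
move=> u_gt0; elim/ltn_ind: n r => n IHn r.
have [r_al|r_nal] := eqVneq (r %% l) 0%nat; last first.
  case: n IHn => [|n] IHn; first by rewrite big_seq1 /slots /occ_at /=; ring.
  rewrite /= big_allpairs_dep slots_cons //.
  under eq_bigr => a _ do under eq_bigr => w _ do rewrite occ_at_cons (negbTE r_nal).
  by rewrite (eq_bigr _ (fun a _ => IHn n (ltnSn n) r.+1)) Rsum_const nwordsS -!Rmult_assoc.
have [n_lt|n_ge] := ltnP n l.
  rewrite slots_small // big_seq big1 => [|w]; first by rewrite /=; ring.
  by rewrite mem_words => /eqP wn; rewrite occ_at_small ?wn //=; ring.
rewrite -(subnKC n_ge) big_words_add slots_add //.
set m := (n - l)%nat; set d := fun w => q * INR (occ_at u (r + l) w) - INR (slots (r + l) m).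
set e := fun p : seq A => q * INR (p == u) - 1.
rewrite (eq_big_seq (fun p => \sum_(w <- words A m) (e p + d w) ^ 2)); last first.
  move=> p; rewrite mem_words => /eqP pl; apply: eq_bigr => w _.
  rewrite occ_at_cat_aligned ?pl ?modnDr // occ_at_eq_size // ?modnDr // r_al eqxx andTb.
  by rewrite plus_INR S_INR /e /d; ring.
rewrite Rsum_sq_add IHn; last by lia.
have sum_indicator : \sum_(p <- words A l) INR (p == u) = 1.
  rewrite -(@Rsum_pick _ (words A l) u (fun=> 1)) ?uniq_words ?mem_words //.
  by apply: eq_bigr => p _; rewrite eq_sym; ring.
have sum_e : \sum_(p <- words A l) e p = 0.
  rewrite /e /Rminus Rsum_add /= -Rmult_sumr Rsum_const sum_indicator size_wordsR; ring.
have sum_e2 : \sum_(p <- words A l) e p ^ 2 = q * (q - 1).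
  rewrite (eq_bigr (fun p => (q * q - 2 * q) * INR (p == u) + 1)); last first.
    by move=> p _; rewrite /e; case: (p == u) => /=; ring.
  rewrite Rsum_add /= -Rmult_sumr Rsum_const sum_indicator size_wordsR; ring.
by rewrite sum_e sum_e2 !size_wordsR S_INR nwordsD; ring.
Qed.

End Variance.

Lemma Rabs_le_sq_div (d T : R) : 0 < T -> Rabs d <= d ^ 2 / T + T.
Proof.
move=> T_gt0; have := Rabs_pos d => abs_ge0.
have -> : d ^ 2 / T + T = Rabs d + ((Rabs d - T) ^ 2 + T * Rabs d) / T.
  by rewrite -pow2_abs; field; lra.
suff : 0 <= ((Rabs d - T) ^ 2 + T * Rabs d) / T by lra.
by apply: Rdiv_le_0_compat => //; nra.
Qed.

(* [q l] pays for the occurrences straddling two L-blocks, [L / l] for the slots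
   of one L-block, and the last term for the deviations ([sum_deviation_le]). *)
Definition block_bound (l L q C T : R) : R := q * l + L / l + C * l * (L / l * q / T + T).

Lemma block_bound_le (l L q C T e : R) :
  0 < l -> 0 < L -> 1 <= q -> 0 <= C -> 0 < T ->
  C * l / T <= e / 4 -> (l ^ 2 + C * l ^ 2 * T) / L <= e / 4 ->
  l / L * (block_bound l L q C T / q) <= / q + e / 2.
Proof.
move=> l_gt0 L_gt0 q_ge1 C_ge0 T_gt0 T_big L_big.
have -> : l / L * (block_bound l L q C T / q) =
    l ^ 2 / L + / q + C * l / T + C * l ^ 2 * T / L * / q.
  by rewrite /block_bound; field; lra.
have : C * l ^ 2 * T / L * / q <= C * l ^ 2 * T / L.
  rewrite -[X in _ <= X]Rmult_1_r; apply: Rmult_le_compat_l.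
    by apply: Rdiv_le_0_compat => //; apply: Rmult_le_pos; [nra | lra].
  by rewrite -Rinv_1; apply: Rinv_le_contravar; lra.
have : (l ^ 2 + C * l ^ 2 * T) / L = l ^ 2 / L + C * l ^ 2 * T / L by field; lra.
lra.
Qed.

Section BlockBound.
Variables (A : finType) (x : nat -> A) (u : seq A) (L : nat).
Hypothesis u_gt0 : (0 < size u)%nat.
Local Notation l := (size u).
Local Notation q := (nwords A l).

Definition deviation (t : seq A) : R :=
  \sum_(r <- iota 0 l) Rabs (q * INR (occ_at u r t) - INR (slots u r L)).

Lemma deviation_ge0 t : 0 <= deviation t.
Proof. by apply: Rsum_ge0 => r _; apply: Rabs_pos. Qed.

Lemma slots_le_R r : INR (slots u r L) <= INR L / INR l.
Proof.
have l_gt0 : 0 < INR l by apply: lt_0_INR; apply/ltP.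
by rewrite -Rle_div_r // -mult_INR; apply/le_INR/leP/slots_le.
Qed.

Lemma occ_at_le_deviation r t : q * INR (occ_at u r t) <= INR L / INR l + deviation t.
Proof.
rewrite -occ_at_mod; have r_in : (r %% l)%nat \in iota 0 l by rewrite mem_iota ltn_pmod.
have /= := Rle_sum_term (fun r _ => Rabs_pos (q * INR (occ_at u r t) - INR (slots u r L))) r_in.
have := Rle_abs (q * INR (occ_at u (r %% l) t) - INR (slots u (r %% l) L)).
have := slots_le_R (r %% l); rewrite /deviation; lra.
Qed.

Lemma sum_deviation_le T : 0 < T ->
  \sum_(t <- words A L) deviation t <= INR l * nwords A L * (INR L / INR l * q / T + T).
Proof.
move=> T_gt0; rewrite /deviation exchange_big /=.
set c := nwords A L * (INR L / INR l * q / T + T).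
apply: Rle_trans (Rle_sum (G := fun _ => c) _) _; last first.
  by rewrite Rsum_const size_iota /c; lra.
move=> r _; set d := fun t => q * INR (occ_at u r t) - INR (slots u r L).
apply: Rle_trans (Rle_sum (G := fun t => d t ^ 2 / T + T) _) _.
  by move=> t _; apply: Rabs_le_sq_div.
rewrite Rsum_add /= -Rmult_suml sum_sq_occ_at // Rsum_const size_wordsR /c.
have s_le := slots_le_R r; have s_ge0 := pos_INR (slots u r L).
have q_ge1 := nwords_ge1 (x 0) l; have nL_ge1 := nwords_ge1 (x 0) L.
have var_le : INR (slots u r L) * (q - 1) <= INR L / INR l * q by nra.
have nL_T_ge0 : 0 <= nwords A L / T by apply: Rdiv_le_0_compat; lra.
have := Rmult_le_compat_l _ _ _ nL_T_ge0 var_le; rewrite /Rdiv; lra.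
Qed.

Lemma nblocks_le C T N : 0 <= C -> 0 < T ->
  (forall t, t \in words A L -> INR (nblocks x L t N) <= C / nwords A L * INR N) ->
  q * INR (nblocks x l u (L * N %/ l)) <= INR N * block_bound (INR l) (INR L) q C T.
Proof.
move=> C_ge0 T_gt0 freqL; rewrite /block_bound.
have occ_le : INR (nblocks x l u (L * N %/ l)) <=
    \sum_(0 <= j < N) (INR l + INR (occ_at u (j * L) (block x L j))).
  rewrite -aligned_occ_prefix // aligned_occE //; under eq_bigr do rewrite -plus_INR.
  by rewrite -INR_sum; apply/le_INR/leP/occ_at_prefix_le.
have dev_le : q * \sum_(0 <= j < N) (INR l + INR (occ_at u (j * L) (block x L j))) <=
    INR N * (q * INR l + INR L / INR l) + \sum_(0 <= j < N) deviation (block x L j).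
  have -> : INR N = INR (size (index_iota 0 N)) by rewrite /index_iota subn0 size_iota.
  rewrite Rmult_sumr -Rsum_const -Rsum_add.
  apply: Rle_sum => j _; have := occ_at_le_deviation (j * L) (block x L j); lra.
have regroup : \sum_(0 <= j < N) deviation (block x L j) =
    \sum_(t <- words A L) INR (nblocks x L t N) * deviation t.
  by apply: Rsum_regroup => [|j]; rewrite ?uniq_words ?mem_words ?size_block.
have freq_le : \sum_(t <- words A L) INR (nblocks x L t N) * deviation t <=
    C / nwords A L * INR N * \sum_(t <- words A L) deviation t.
  rewrite Rmult_sumr; apply: Rle_sum => t tL.
  by apply: Rmult_le_compat_r; [exact: deviation_ge0 | exact: freqL].
have := sum_deviation_le T_gt0; set X := (_ / T + T) => sum_dev.
have nwords_gt0 : 0 < nwords A L by have := nwords_ge1 (x 0) L; lra.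
have coef_ge0 : 0 <= C / nwords A L * INR N.
  by apply: Rmult_le_pos; [apply: Rdiv_le_0_compat | apply: pos_INR].
have := Rmult_le_compat_l _ _ _ coef_ge0 sum_dev.
have -> : C / nwords A L * INR N * (INR l * nwords A L * X) = INR N * (C * INR l * X).
  by field; lra.
have := nwords_ge1 (x 0) l; have := Rmult_le_compat_l q _ _ _ occ_le; nra.
Qed.

End BlockBound.

Lemma eventually_lt_of_LimSup (f : nat -> R) (c : R) :
  Rbar_lt (LimSup_seq f) c -> eventually (fun n => f n < c).
Proof.
case: (ex_LimSup_seq f) => [[s| |] is_s]; rewrite (is_LimSup_seq_unique _ _ is_s) //= => s_lt.
  have [_ [N f_lt]] := is_s (mkposreal _ (proj2 (Rlt_0_minus _ _) s_lt)).
  by exists N => n /f_lt /=; lra.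
exact: is_s.
Qed.

Lemma eventually_all (T : eqType) (s : seq T) (P : T -> nat -> Prop) :
  (forall t, t \in s -> eventually (P t)) -> eventually (fun n => forall t, t \in s -> P t n).
Proof.
elim: s => [|a s IHs] ev_s; first by apply: filter_forall.
have ev_a := ev_s a (mem_head a s).
have /IHs ev_tail : forall t, t \in s -> eventually (P t).
  by move=> t ts; apply: ev_s; rewrite in_cons ts orbT.
apply: filter_imp (filter_and _ _ ev_a ev_tail) => n [Pa Ps] t.
by rewrite in_cons => /orP [/eqP -> | /Ps].
Qed.

Lemma eventually_INR_gt (X : R) : eventually (fun n => X < INR n).
Proof. exact: (proj2 (is_lim_seq_spec _ _) is_lim_seq_INR X). Qed.

Lemma nblocks_interpolate (A : eqType) (x : nat -> A) (u : seq A) l L (K e : R) :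
  (0 < l)%nat -> (0 < L)%nat -> 0 <= K -> 0 < e ->
  eventually (fun N => INR (nblocks x l u (L * N %/ l)) <= INR N * K) ->
  eventually (fun M => INR (nblocks x l u M) <= (INR l / INR L * K + e) * INR M).
Proof.
move=> l_gt0 L_gt0 K_ge0 e_gt0 [N0 bound]; have [M1 M1_gt] := eventually_INR_gt (K / e).
exists (maxn (N0 * L) M1) => M /leP; rewrite geq_max => /andP [N0M M1M].
set N := (l * M %/ L).+1.
have M_le : (M <= L * N %/ l)%nat.
  by rewrite leq_divRL // [(M * l)%nat]mulnC [(L * N)%nat]mulnC ltnW // ltn_ceil.
have N0N : (N0 <= N)%nat.
  by apply: leqW; rewrite leq_divRL //; apply: leq_trans N0M _; rewrite leq_pmull.
have N_le : INR N <= INR l / INR L * INR M + 1.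
  have L_pos : 0 < INR L by apply: lt_0_INR; apply/ltP.
  rewrite /N S_INR; apply: Rplus_le_compat_r; apply: (Rmult_le_reg_r (INR L)) => //.
  rewrite -mult_INR (_ : INR l / INR L * INR M * INR L = INR (l * M)); last first.
    by rewrite mult_INR; field; lra.
  exact/le_INR/leP/leq_divM.
have K_lt : K < INR M * e by rewrite -Rlt_div_l //; apply: M1_gt; apply/leP.
have := bound N (leP N0N); have := le_INR _ _ (leP (nblocks_mono x l u M_le)).
have := Rmult_le_compat_r K _ _ K_ge0 N_le; nra.
Qed.

Lemma filterlim_divn l : (0 < l)%nat -> filterlim (fun n => n %/ l)%nat eventually eventually.
Proof.
move=> l_gt0 P [N PN]; exists (N * l)%nat => n /leP n_ge.
by apply: PN; apply/leP; rewrite leq_divRL.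
Qed.

Lemma is_lim_seq_divn_ratio l : (0 < l)%nat ->
  is_lim_seq (fun n => INR (n %/ l * l) / INR n) 1.
Proof.
move=> l_gt0; have l_pos : 0 < INR l by apply: lt_0_INR; apply/ltP.
have inv_lim : is_lim_seq (fun n => / INR n) 0 by apply: (is_lim_seq_inv _ _ is_lim_seq_INR).
have lower_lim : is_lim_seq (fun n => 1 - INR l * / INR n) 1.
  have := is_lim_seq_minus' _ _ _ _ (is_lim_seq_const 1) (is_lim_seq_scal_l _ (INR l) _ inv_lim).
  by rewrite /= Rmult_0_r Rminus_0_r.
apply: (is_lim_seq_le_le_loc _ _ _ _ _ lower_lim (is_lim_seq_const 1)).
exists l => n /leP n_ge; have n_pos : 0 < INR n by apply: lt_0_INR; apply/ltP/(leq_trans l_gt0).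
have floor_le : INR (n %/ l * l) <= INR n by apply/le_INR/leP/leq_divM.
have floor_gt : INR n - INR l <= INR (n %/ l * l).
  suff : INR n <= INR (n %/ l * l) + INR l by lra.
  by rewrite -plus_INR; apply/le_INR/leP; have := ltn_ceil n l_gt0; lia.
split; last by rewrite Rle_div_l; lra.
rewrite -Rle_div_r //; have : (1 - INR l * / INR n) * INR n = INR n - INR l by field; lra.
lra.
Qed.

Section Normality.
Variables (A : finType) (x : nat -> A).

Definition bounded_block_freq (C : R) : Prop :=
  forall m, exists2 L, (m <= L)%nat & forall t, size t = L ->
    eventually (fun N => INR (nblocks x L t N) <= C / nwords A L * INR N).

Lemma nblocks_freq_upper C (u : seq A) e :
  0 < C -> bounded_block_freq C -> (0 < size u)%nat -> 0 < e ->
  eventually (fun M => INR (nblocks x (size u) u M) <= (/ nwords A (size u) + e) * INR M).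
Proof.
move=> C_gt0 freqC u_gt0 e_gt0; set l := size u; set q := nwords A l.
have q_ge1 : 1 <= q := nwords_ge1 (x 0) l.
have l_gt0 : 0 < INR l by apply: lt_0_INR; apply/ltP.
set T := 4 * C * INR l / e.
have T_gt0 : 0 < T by rewrite /T; apply: Rdiv_lt_0_compat => //; nra.
set Y := INR l ^ 2 + C * INR l ^ 2 * T.
have Y_gt0 : 0 < Y.
  have l2_gt0 : 0 < INR l ^ 2 by apply: pow_lt.
  have : 0 < C * INR l ^ 2 * T by apply: Rmult_lt_0_compat => //; apply: Rmult_lt_0_compat.
  rewrite /Y; lra.
have [m L_big] := eventually_INR_gt (Y * 4 / e).
have [L mL freqL] := freqC m; have {}L_big := L_big L (leP mL).
have Y_lt : Y < e / 4 * INR L by move: L_big; rewrite Rlt_div_l //; lra.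
have L_pos : 0 < INR L by apply: Rlt_trans L_big; apply: Rdiv_lt_0_compat; lra.
have L_gt0 : (0 < L)%nat by apply/ltP/INR_lt.
set K := block_bound (INR l) (INR L) q C T / q.
have bound_le : INR l / INR L * K <= / q + e / 2.
  apply: block_bound_le => //; try lra.
    by rewrite /T; apply: Req_le; field; lra.
  by rewrite Rle_div_l // -/Y; lra.
have K_ge0 : 0 <= K.
  have Ll_ge0 : 0 <= INR L / INR l by apply: Rdiv_le_0_compat; lra.
  have LlqT_ge0 : 0 <= INR L / INR l * q / T by apply: Rdiv_le_0_compat => //; nra.
  have : 0 <= C * INR l * (INR L / INR l * q / T + T) by apply: Rmult_le_pos; [nra | lra].
  by rewrite /K /block_bound => ?; apply: Rdiv_le_0_compat; [nra | lra].
have freq_multiples : eventually (fun N => INR (nblocks x l u (L * N %/ l)) <= INR N * K).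
  have /eventually_all : forall t, t \in words A L ->
      eventually (fun N => INR (nblocks x L t N) <= C / nwords A L * INR N).
    by move=> t; rewrite mem_words => /eqP /freqL.
  apply: filter_imp => N /(nblocks_le u_gt0 (Rlt_le _ _ C_gt0) T_gt0); rewrite -/l -/q => bound.
  apply: (Rmult_le_reg_l q); first lra.
  suff -> : q * (INR N * K) = INR N * block_bound (INR l) (INR L) q C T by [].
  by rewrite /K; field; lra.
have half_e_gt0 : 0 < e / 2 by lra.
apply: filter_imp (nblocks_interpolate u_gt0 L_gt0 K_ge0 half_e_gt0 freq_multiples) => M.
rewrite -/l; have : INR l / INR L * K + e / 2 <= / q + e by lra.
by move/(Rmult_le_compat_r _ _ _ (pos_INR M)); lra.
Qed.

Lemma sum_nblocks l M : \sum_(t <- words A l) INR (nblocks x l t M) = INR M.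
Proof.
have := @Rsum_regroup _ _ (index_iota 0 M) (block x l) (words A l) (fun=> 1) (uniq_words A l).
rewrite Rsum_const /index_iota subn0 size_iota Rmult_1_r => ->.
  by apply: eq_bigr => t _; rewrite Rmult_1_r /nblocks /index_iota subn0.
by move=> j; rewrite mem_words size_block.
Qed.

Lemma nblocks_freq_lim C (u : seq A) : 0 < C -> bounded_block_freq C -> (0 < size u)%nat ->
  is_lim_seq (fun M => INR (nblocks x (size u) u M) / INR M) (/ nwords A (size u)).
Proof.
move=> C_gt0 freqC u_gt0; set l := size u; set q := nwords A l.
have q_ge1 : 1 <= q := nwords_ge1 (x 0) l.
apply/is_lim_seq_spec => eps; set e := eps / (2 * q).
have e_gt0 : 0 < e by apply: Rdiv_lt_0_compat; [exact: cond_pos | lra].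
have /eventually_all upper : forall t, t \in words A l ->
    eventually (fun M => INR (nblocks x l t M) <= (/ q + e) * INR M).
  move=> t; rewrite mem_words => /eqP tl.
  by have := @nblocks_freq_upper C t e C_gt0 freqC; rewrite tl; apply.
have [M0 M0_gt] := eventually_INR_gt 0.
apply: filter_imp (filter_and _ _ upper (ex_intro _ M0 M0_gt)) => M [{}upper M_gt0].
set U := (/ q + e) * INR M; set n := fun t => INR (nblocks x l t M).
have slack : \sum_(t <- words A l) (U - n t) + INR M = q * U.
  rewrite /q -(size_wordsR A l) -Rsum_const -(sum_nblocks l M) -Rsum_add.
  by apply: eq_bigr => t _; rewrite /n; ring.
have slack_ge0 t : t \in words A l -> 0 <= U - n t by move/upper; rewrite /U /n; lra.
have n_u_le : n u <= U by apply: upper; rewrite mem_words.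
have n_u_ge : U - n u <= \sum_(t <- words A l) (U - n t).
  by apply: Rle_sum_term slack_ge0 _; rewrite mem_words.
have e_eps : e * (2 * q) = eps by rewrite /e; field; lra.
have lower_eq : INR M - (q - 1) * U = (/ q - (q - 1) * e) * INR M by rewrite /U; field; lra.
rewrite -/(n u); set r := n u / INR M.
have n_u_eq : n u = r * INR M by rewrite /r; field; lra.
have r_le : r <= / q + e by apply: (Rmult_le_reg_r (INR M)) => //; rewrite -n_u_eq; exact: n_u_le.
have r_ge : / q - (q - 1) * e <= r by apply: (Rmult_le_reg_r (INR M)) => //; lra.
apply: Rabs_def1; nra.
Qed.

Lemma normal_aligned_blocks (w : seq A) : normal x -> (0 < size w)%nat ->
  is_lim_seq (fun N => INR (aligned_occ (word_prefix x (size w * N)) w) / INR N)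
    (/ nwords A (size w)).
Proof.
move=> norm w_gt0; have mul_tends : filterlim (fun N => size w * N)%nat eventually eventually.
  by apply: eventually_subseq => n; apply/ltP; rewrite ltn_pmul2l.
apply: is_lim_seq_ext_loc (is_lim_seq_subseq _ _ _ mul_tends (norm _ w w_gt0 erefl)).
exists 1%nat => N /leP N_gt0; have l_pos : 0 < INR (size w) by apply: lt_0_INR; apply/ltP.
by rewrite mult_INR Rmult_div_r //; lra.
Qed.

Lemma normalE : normal x <-> forall u : seq A, (0 < size u)%nat ->
  is_lim_seq (fun N => INR (nblocks x (size u) u N) / INR N) (/ nwords A (size u)).
Proof.
split=> [norm u u_gt0 | freq l u l_gt0 ul]; last subst l.
  apply: is_lim_seq_ext (normal_aligned_blocks norm u_gt0) => N.
  by rewrite aligned_occ_prefix // mulKn.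
have := is_lim_seq_mult' _ _ _ _ (is_lim_seq_subseq _ _ _ (filterlim_divn l_gt0) (freq u l_gt0))
  (is_lim_seq_divn_ratio l_gt0).
rewrite Rmult_1_r; apply: is_lim_seq_ext_loc.
exists (size u) => n /leP n_ge; have l_pos : 0 < INR (size u) by apply: lt_0_INR; apply/ltP.
have M_pos : 0 < INR (n %/ size u) by apply: lt_0_INR; apply/ltP; rewrite divn_gt0.
have n_pos : 0 < INR n by apply: lt_0_INR; apply/ltP/(leq_trans l_gt0).
rewrite aligned_occ_prefix // mult_INR.
set b := INR (nblocks _ _ _ _); set k := INR (size u); set M := INR (n %/ size u).
by field; rewrite /k /M; lra.
Qed.

Lemma bounded_block_freq_of_LimSup (C : R) :
  (forall m, exists L, (m <= L)%nat /\ forall w : seq A, size w = L ->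
    Rbar_lt (LimSup_seq (fun N => INR (aligned_occ (word_prefix x (L * N)) w) / INR N))
      (C / INR #|A| ^ L)) ->
  bounded_block_freq C.
Proof.
move=> hyp m; have [L [mL bnd]] := hyp m.+1; exists L => [|t tL]; first exact: ltnW.
have L_gt0 : (0 < L)%nat by apply: leq_trans mL.
have ev_lt := eventually_lt_of_LimSup (bnd t tL).
apply: filter_imp (filter_and _ _ ev_lt (eventually_INR_gt 0)) => N [+ N_pos].
by rewrite aligned_occ_prefix ?tL // mulKn // Rlt_div_l // => /Rlt_le.
Qed.

End Normality.

Theorem lemma15 (A : finType) (x : nat -> A) :
  normal x <->
  exists C : R, (0 < C)%R /\
    forall m : nat, exists l : nat, (m <= l)%nat /\
      forall w : seq A, size w = l ->
        Rbar_lt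
          (LimSup_seq (fun N => (INR (aligned_occ (word_prefix x (l * N)%nat) w) / INR N)%R))
          (Finite (C / (INR #|A| ^ l))%R).
Proof.
split=> [norm | [C [C_gt0 hyp]]].
  exists 2; split=> [|m]; first lra.
  exists m.+1; split=> // w w_l; have w_gt0 : (0 < size w)%nat by rewrite w_l.
  have := normal_aligned_blocks norm w_gt0.
  rewrite w_l => /is_lim_LimSup_seq/is_LimSup_seq_unique ->.
  have q_pos : 0 < / nwords A m.+1.
    by apply: Rinv_0_lt_compat; have := nwords_ge1 (x 0%nat) m.+1; lra.
  by rewrite /= -[X in X < _]Rmult_1_l; apply: Rmult_lt_compat_r => //; lra.
apply/normalE => u u_gt0.
exact: nblocks_freq_lim C_gt0 (bounded_block_freq_of_LimSup hyp) u_gt0.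
Qed.
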